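(* Let $(\mu_n)_{n\ge1}$ be a sequence of probability measures on $\mathbb{Z}$ such that (1) there exist $0<\alpha\le1$ and $C>0$ such that for all $n\ge1$, $|\mu_n(x+y)-\mu_n(x)|\le C\frac{|y|^{\alpha}}{|x|^{1+\alpha}}$ for all $x,y\in\mathbb{Z}$ with $2|y|\le|x|$; (2) $\hat{\mu}_n(t)\to0$ as $n\to\infty$ for almost every $t\in[-1/2,1/2)$. Then $\|\mu_n-\mu_n*\delta_1\|_1=\sum_{k\in\mathbb{Z}}|\mu_n(k)-\mu_n(k-1)|\to0$ as $n\to\infty$.
   Context: $\delta_1$ denotes the point mass at $1$, so $(\mu*\delta_1)(k)=\mu(k-1)$. The Fourier transform of a probability measure $\mu$ on $\mathbb{Z}$ is $\hat{\mu}(t)=\sum_{k\in\mathbb{Z}}\mu(k)e^{2\pi ikt}$, $t\in[-1/2,1/2)$. *)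

From Stdlib Require Export Reals ZArith.
Open Scope R_scope.

(* Sum over Z: sum_{k in Z} f k = l, as the limit of the nat-indexed series
   whose n-th term is f n + f (-n-1) (enumerating Z as 0,-1,1,-2,2,...). *)
Definition Zsum (f : Z -> R) (l : R) : Prop :=
  infinite_sum (fun n : nat => f (Z.of_nat n) + f (- Z.of_nat n - 1)%Z) l.

Definition prob_Z (mu : Z -> R) : Prop :=
  (forall k, 0 <= mu k) /\ Zsum mu 1.

(* x^a for x >= 0, with the convention 0^a = 0 (a > 0). *)
Definition rpow (x a : R) : R :=
  if Req_EM_T x 0 then 0 else Rpower x a.

Definition null_set (S : R -> Prop) : Prop :=
  forall eps, 0 < eps ->
  exists a b : nat -> R,
    (forall n, a n <= b n) /\
    (forall x, S x -> exists n, a n < x < b n) /\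
    (forall N, sum_f_R0 (fun n => b n - a n) N <= eps).

(* Real and imaginary parts of hat(mu)(t) = sum_k mu(k) e^{2 pi i k t}. *)
Definition fourier_re (mu : Z -> R) (t v : R) : Prop :=
  Zsum (fun k => mu k * cos (2 * PI * IZR k * t)) v.
Definition fourier_im (mu : Z -> R) (t v : R) : Prop :=
  Zsum (fun k => mu k * sin (2 * PI * IZR k * t)) v.

From Pilot Require Import Defs.
From Stdlib Require Import Lra Lia ClassicalEpsilon.
From HB Require structures.
From mathcomp Require all_boot all_order all_algebra all_classical all_reals all_analysis.
From mathcomp Require measurable_realfun Rstruct Rstruct_topology.

(* Write e_n(k) = |mu_n(k) - mu_n(k-1)|, so that the goal is
   sum_k e_n(k) -> 0.  The proof has three independent ingredients.
   - Fourier inversion (section FourierInversion): for a probability nu,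
     nu(k) = int_{-1/2}^{1/2} G_k(t) dt with G_k(t) = sum_j nu(j) cos(2 pi (j-k) t)
     = cos(2 pi k t) Re nu^(t) + sin(2 pi k t) Im nu^(t); the partial sums are
     integrated with explicit primitives and |G_k| <= 1 allows dominated
     convergence.  A second dominated convergence, using nu_n^ -> 0 a.e., gives
     mu_n(k) -> 0 for every fixed k.  Only four properties of the integral are
     used; they are proved for the Lebesgue integral in module Lebesgue.
   - Uniform tails: hypothesis (1) with y = 1 gives e_n(k) <= C |k-1|^(-1-a), and
     x^(-1-a) <= ((x-1)^(-a) - x^(-a))/a makes the tails beyond M at most
     (2C/a) (M-1)^(-a), uniformly in n.
   - A Tannery-type lemma (series_cv0_of_uniform_tails): pointwise null terms
     with uniformly small tails have sums tending to 0.
   The main theorem combines the three after reindexing n |-> max 1 n, which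
   extends the hypotheses (stated for n >= 1) to all n. *)

Lemma Rabs_le_bounds (a b : R) : Rabs a <= b -> - b <= a <= b.
Proof. intros H. pose proof (Rle_abs a). pose proof (Rle_abs (- a)). rewrite Rabs_Ropp in *. lra. Qed.

Lemma Un_cv_eventually_eq (u v : nat -> R) (l : R) (N : nat) :
  (forall n, (N <= n)%nat -> u n = v n) -> Un_cv u l -> Un_cv v l.
Proof.
intros E H eps Heps. destruct (H eps Heps) as [N' HN']. exists (Nat.max N N').
intros n Hn. rewrite <- E by lia. apply HN'. lia.
Qed.

Lemma Un_cv_ext (u v : nat -> R) (l : R) : (forall n, u n = v n) -> Un_cv u l -> Un_cv v l.
Proof. intros E. apply (Un_cv_eventually_eq u v l 0). intros n _. apply E. Qed.

Lemma Un_cv_const (c : R) : Un_cv (fun _ => c) c.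
Proof.
intros eps Heps. exists 0%nat. intros n _. unfold R_dist. rewrite Rminus_diag, Rabs_R0. lra.
Qed.

Lemma Un_cv_scal (u : nat -> R) (l c : R) : Un_cv u l -> Un_cv (fun n => c * u n) (c * l).
Proof. intros H. apply CV_mult; [apply Un_cv_const | exact H]. Qed.

(* A chosen limit of a sequence (meaningful when the sequence converges). *)
Definition lim_seq (u : nat -> R) : R := epsilon (inhabits 0) (fun l => Un_cv u l).

Lemma lim_seq_spec (u : nat -> R) (l : R) : Un_cv u l -> lim_seq u = l.
Proof.
intros H. apply (UL_sequence u); [|exact H].
apply (epsilon_spec (inhabits 0) (fun l => Un_cv u l)). exists l. exact H.
Qed.

Lemma lim_seq_cv (u : nat -> R) : (exists l, Un_cv u l) -> Un_cv u (lim_seq u).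
Proof. intros [l H]. rewrite (lim_seq_spec u l H). exact H. Qed.

Lemma series_cv_of_dominated (T w : nat -> R) (lw : R) :
  (forall i, Rabs (T i) <= w i) -> Un_cv (sum_f_R0 w) lw -> exists l, Un_cv (sum_f_R0 T) l.
Proof.
intros HT Hw.
assert (Hshift : {l | Un_cv (sum_f_R0 (fun i => T i + w i)) l}).
{ apply Rseries_CV_comp with (Bn := fun i => w i * 2).
  - intro i. pose proof (Rabs_le_bounds _ _ (HT i)). lra.
  - exists (2 * lw). apply Un_cv_ext with (u := fun N => 2 * sum_f_R0 w N).
    + intro N. apply scal_sum.
    + apply Un_cv_scal. exact Hw. }
destruct Hshift as [l Hl]. exists (l - lw).
apply Un_cv_ext with (u := fun N => sum_f_R0 (fun i => T i + w i) N - sum_f_R0 w N).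
- intro N. rewrite <- minus_sum. apply sum_eq. intros. ring.
- apply CV_minus; assumption.
Qed.

Lemma partial_sum_mono (e : nat -> R) (m K : nat) :
  (forall i, 0 <= e i) -> (m <= K)%nat -> sum_f_R0 e m <= sum_f_R0 e K.
Proof.
intros He HmK. induction HmK as [|K _ IH]; [lra|].
rewrite tech5. pose proof (He (S K)). lra.
Qed.

Lemma partial_sum_cv0 (e : nat -> nat -> R) (M : nat) :
  (forall i, Un_cv (fun n => e n i) 0) -> Un_cv (fun n => sum_f_R0 (e n) M) 0.
Proof.
intros He. induction M as [|M IH]; [apply He|].
replace 0 with (0 + 0) by ring. apply CV_plus; [exact IH | apply He].
Qed.

Lemma series_cv0_of_uniform_tails (e : nat -> nat -> R) :
  (forall n i, 0 <= e n i) ->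
  (forall i, Un_cv (fun n => e n i) 0) ->
  (forall eps, 0 < eps -> exists M,
     forall n j, sum_f_R0 (e n) (M + j) - sum_f_R0 (e n) M <= eps) ->
  exists L : nat -> R, (forall n, Un_cv (sum_f_R0 (e n)) (L n)) /\ Un_cv L 0.
Proof.
intros Hpos Hpt Htail.
assert (Hbound : forall eps, 0 < eps -> exists M, forall n K,
          sum_f_R0 (e n) K <= sum_f_R0 (e n) M + eps).
{ intros eps Heps. destruct (Htail eps Heps) as [M HM]. exists M. intros n K.
  destruct (le_lt_dec M K) as [h|h].
  - specialize (HM n (K - M)%nat). replace (M + (K - M))%nat with K in HM by lia. lra.
  - pose proof (partial_sum_mono (e n) K M (Hpos n) ltac:(lia)). lra. }
assert (Hcv : forall n, Un_cv (sum_f_R0 (e n)) (lim_seq (sum_f_R0 (e n)))).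
{ intro n. apply lim_seq_cv. destruct (Hbound 1 Rlt_0_1) as [M HM].
  destruct (growing_cv (sum_f_R0 (e n))) as [l Hl].
  - intro K. apply partial_sum_mono; [apply Hpos | lia].
  - exists (sum_f_R0 (e n) M + 1). intros x [K ->]. apply HM.
  - exists l. exact Hl. }
exists (fun n => lim_seq (sum_f_R0 (e n))). split; [exact Hcv|].
intros eps Heps.
destruct (Hbound (eps / 2) ltac:(lra)) as [M HM].
destruct (partial_sum_cv0 e M Hpt (eps / 4) ltac:(lra)) as [N HN].
exists N. intros n Hn. specialize (HN n Hn). unfold R_dist in *. rewrite Rminus_0_r in *.
apply Rabs_def2 in HN.
assert (Hle : lim_seq (sum_f_R0 (e n)) <= sum_f_R0 (e n) M + eps / 2).
{ apply Rle_cv_lim with (Un := sum_f_R0 (e n)) (Vn := fun _ => sum_f_R0 (e n) M + eps / 2).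
  - apply HM.
  - apply Hcv.
  - apply Un_cv_const. }
assert (Hge : 0 <= lim_seq (sum_f_R0 (e n))).
{ apply Rle_cv_lim with (Un := fun _ => 0) (Vn := sum_f_R0 (e n)).
  - intro K. apply cond_pos_sum, Hpos.
  - apply Un_cv_const.
  - apply Hcv. }
rewrite Rabs_right by lra. lra.
Qed.

Lemma null_set_empty : null_set (fun _ => False).
Proof.
intros eps Heps. exists (fun _ => 0), (fun _ => 0). split; [|split].
- intros; lra.
- intros x [].
- intros K. rewrite sum_eq_R0; [lra | intros; ring].
Qed.

(* Adding one point to a null set keeps it null (an extra interval of length eps/2). *)
Lemma null_set_add_pt (N : R -> Prop) (p : R) : null_set N -> null_set (fun t => N t \/ t = p).
Proof.
intros HN eps Heps.
destruct (HN (eps / 2) ltac:(lra)) as [a [b [Hab [Hcov Hsum]]]].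
exists (fun n => match n with O => p - eps / 4 | S n => a n end).
exists (fun n => match n with O => p + eps / 4 | S n => b n end).
split; [|split].
- intros [|n]; [lra | apply Hab].
- intros x [Nx | ->].
  + destruct (Hcov x Nx) as [n Hn]. exists (S n). exact Hn.
  + exists O. lra.
- intros [|K]; [simpl; lra|].
  rewrite decomp_sum by lia. simpl pred. specialize (Hsum K). lra.
Qed.

Definition zpair (f : Z -> R) (n : nat) : R := f (Z.of_nat n) + f (- Z.of_nat n - 1)%Z.

(* The index i such that k is one of the two terms grouped in [zpair f i]. *)
Definition zindex (k : Z) : nat := if Z_le_dec 0 k then Z.to_nat k else Z.to_nat (- k - 1).

Lemma zpair_delta (k : Z) (c : R) (i : nat) :
  zpair (fun j => if Z.eq_dec j k then c else 0) i = if Nat.eq_dec i (zindex k) then c else 0.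
Proof.
unfold zpair, zindex.
destruct (Z_le_dec 0 k); repeat destruct Z.eq_dec; destruct Nat.eq_dec; try lia; ring.
Qed.

Lemma sum_delta (p : nat) (c : R) (M : nat) : (p <= M)%nat ->
  sum_f_R0 (fun i => if Nat.eq_dec i p then c else 0) M = c.
Proof.
intros HM. induction M as [|M IH].
- replace p with 0%nat by lia. reflexivity.
- rewrite tech5. destruct (Nat.eq_dec p (S M)) as [-> | Hp].
  + rewrite sum_eq_R0; [destruct Nat.eq_dec; [ring | lia]|].
    intros i Hi. destruct Nat.eq_dec; [lia | reflexivity].
  + rewrite IH by lia. destruct Nat.eq_dec; [lia | ring].
Qed.

Lemma zpair_nonneg (nu : Z -> R) (i : nat) : (forall j, 0 <= nu j) -> 0 <= zpair nu i.
Proof. intros H. unfold zpair. pose proof (H (Z.of_nat i)). pose proof (H (- Z.of_nat i - 1)%Z). lra. Qed.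

Lemma zpair_weighted_bound (nu g : Z -> R) (i : nat) :
  (forall j, 0 <= nu j) -> (forall j, Rabs (g j) <= 1) ->
  Rabs (zpair (fun j => nu j * g j) i) <= zpair nu i.
Proof.
intros Hnu Hg. unfold zpair.
assert (Hterm : forall j, Rabs (nu j * g j) <= nu j).
{ intro j. rewrite Rabs_mult, (Rabs_right (nu j)) by (apply Rle_ge, Hnu).
  rewrite <- (Rmult_1_r (nu j)) at 2. apply Rmult_le_compat_l; [apply Hnu | apply Hg]. }
eapply Rle_trans; [apply Rabs_triang|]. apply Rplus_le_compat; apply Hterm.
Qed.

Lemma prob_weighted_partial_bound (nu g : Z -> R) (M : nat) :
  prob_Z nu -> (forall j, Rabs (g j) <= 1) ->
  Rabs (sum_f_R0 (zpair (fun j => nu j * g j)) M) <= 1.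
Proof.
intros [Hnu Hsum] Hg.
eapply Rle_trans; [apply sum_f_R0_triangle|].
apply Rle_trans with (sum_f_R0 (zpair nu) M).
- apply sum_Rle. intros. apply zpair_weighted_bound; assumption.
- apply sum_incr; [exact Hsum | intro; apply zpair_nonneg, Hnu].
Qed.

(** The cosine series G_k(t) = sum_j nu j cos(2 pi (j - k) t), whose integral
    over a period recovers nu k. *)

Definition cos_shift (k : Z) (t : R) (j : Z) : R := cos (2 * PI * IZR (j - k) * t).

Definition cos_series_partial (nu : Z -> R) (k : Z) (M : nat) (t : R) : R :=
  sum_f_R0 (zpair (fun j => nu j * cos_shift k t j)) M.

Definition cos_series (nu : Z -> R) (k : Z) (t : R) : R :=
  lim_seq (fun M => cos_series_partial nu k M t).

Lemma cos_shift_bound (k : Z) (t : R) (j : Z) : Rabs (cos_shift k t j) <= 1.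
Proof. apply Rabs_le, COS_bound. Qed.

Lemma cos_series_partial_bound (nu : Z -> R) (k : Z) (M : nat) (t : R) :
  prob_Z nu -> Rabs (cos_series_partial nu k M t) <= 1.
Proof. intros Hp. apply prob_weighted_partial_bound; [exact Hp | apply cos_shift_bound]. Qed.

Lemma cos_series_cv (nu : Z -> R) (k : Z) (t : R) :
  prob_Z nu -> Un_cv (fun M => cos_series_partial nu k M t) (cos_series nu k t).
Proof.
intros [Hnu Hsum]. apply lim_seq_cv.
apply (series_cv_of_dominated _ (zpair nu) 1); [|exact Hsum].
intro i. apply zpair_weighted_bound; [exact Hnu | apply cos_shift_bound].
Qed.

Lemma cos_series_bound (nu : Z -> R) (k : Z) (t : R) :
  prob_Z nu -> Rabs (cos_series nu k t) <= 1.
Proof.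
intros Hp. apply Rabs_le.
pose proof (cos_series_cv nu k t Hp) as Hcv.
split; [apply Rle_cv_lim with (Un := fun _ => -1) (Vn := fun M => cos_series_partial nu k M t)
       |apply Rle_cv_lim with (Un := fun M => cos_series_partial nu k M t) (Vn := fun _ => 1)];
  try apply Un_cv_const; try exact Hcv;
  intro M; pose proof (Rabs_le_bounds _ _ (cos_series_partial_bound nu k M t Hp)); lra.
Qed.

Lemma cos_series_partial_continuous (nu : Z -> R) (k : Z) (M : nat) (t : R) :
  continuity_pt (cos_series_partial nu k M) t.
Proof.
assert (Hcos : forall j, continuity_pt (fun t => nu j * cos_shift k t j) t).
{ intro j. unfold cos_shift. reg. }
unfold cos_series_partial.
apply (continuity_pt_finite_SF (fun i t => zpair (fun j => nu j * cos_shift k t j) i)).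
intros i _. unfold zpair. apply continuity_pt_plus; apply Hcos.
Qed.

(* By the addition formula, G_k(t) = cos(2 pi k t) Re nu^(t) + sin(2 pi k t) Im nu^(t). *)
Lemma cos_series_fourier (nu : Z -> R) (k : Z) (t re im : R) :
  fourier_re nu t re -> fourier_im nu t im ->
  cos_series nu k t = cos (2 * PI * IZR k * t) * re + sin (2 * PI * IZR k * t) * im.
Proof.
intros Hre Him. apply lim_seq_spec.
set (c := cos (2 * PI * IZR k * t)). set (s := sin (2 * PI * IZR k * t)).
apply Un_cv_ext with (u := fun M =>
  c * sum_f_R0 (zpair (fun j => nu j * cos (2 * PI * IZR j * t))) M
  + s * sum_f_R0 (zpair (fun j => nu j * sin (2 * PI * IZR j * t))) M).
- intro M. unfold cos_series_partial. rewrite !scal_sum, <- plus_sum.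
  apply sum_eq. intros i _. unfold zpair, cos_shift. rewrite !minus_IZR.
  rewrite !(Rmult_minus_distr_l (2 * PI)), !Rmult_minus_distr_r, !cos_minus.
  fold c s. ring.
- apply CV_plus; apply Un_cv_scal; assumption.
Qed.

Definition cos_primitive (m : Z) (t : R) : R :=
  if Z.eq_dec m 0 then t else sin (2 * PI * IZR m * t) / (2 * PI * IZR m).

Lemma cos_primitive_deriv (m : Z) (t : R) :
  derivable_pt_lim (cos_primitive m) t (cos (2 * PI * IZR m * t)).
Proof.
unfold cos_primitive. destruct (Z.eq_dec m 0) as [-> | Hm].
- rewrite Rmult_0_r, Rmult_0_l, cos_0. apply derivable_pt_lim_id.
- assert (Hc : 2 * PI * IZR m <> 0).
  { pose proof PI_RGT_0. apply not_0_IZR in Hm. apply Rmult_integral_contrapositive; split; lra. }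
  set (c := 2 * PI * IZR m) in *.
  replace (cos (c * t)) with ((cos (c * t) * (c * 1)) / c) by (field; exact Hc).
  apply derivable_pt_lim_div_scal with (f := fun t => sin (c * t)).
  apply (derivable_pt_lim_comp (fun t => c * t) sin).
  + apply derivable_pt_lim_scal with (f := id), derivable_pt_lim_id.
  + apply derivable_pt_lim_sin.
Qed.

Lemma cos_primitive_period (m : Z) :
  cos_primitive m (1 / 2) - cos_primitive m (- (1 / 2)) = if Z.eq_dec m 0 then 1 else 0.
Proof.
unfold cos_primitive. destruct (Z.eq_dec m 0) as [_ | Hm]; [lra|].
rewrite (sin_eq_0_1 (2 * PI * IZR m * (1 / 2))) by (exists m; field).
rewrite (sin_eq_0_1 (2 * PI * IZR m * (- (1 / 2)))) by (exists (- m)%Z; rewrite opp_IZR; field).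
unfold Rdiv. ring.
Qed.

Lemma sum_f_R0_derivable (F f : nat -> R -> R) (t : R) (M : nat) :
  (forall i, derivable_pt_lim (F i) t (f i t)) ->
  derivable_pt_lim (fun s => sum_f_R0 (fun i => F i s) M) t (sum_f_R0 (fun i => f i t) M).
Proof.
intros HF. induction M as [|M IH]; [apply HF|].
apply (derivable_pt_lim_plus (fun s => sum_f_R0 (fun i => F i s) M) (F (S M))); [exact IH | apply HF].
Qed.

Definition cos_series_primitive (nu : Z -> R) (k : Z) (M : nat) (t : R) : R :=
  sum_f_R0 (zpair (fun j => nu j * cos_primitive (j - k) t)) M.

Lemma cos_series_primitive_deriv (nu : Z -> R) (k : Z) (M : nat) (t : R) :
  derivable_pt_lim (cos_series_primitive nu k M) t (cos_series_partial nu k M t).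
Proof.
apply (sum_f_R0_derivable (fun i s => zpair (fun j => nu j * cos_primitive (j - k) s) i)
         (fun i s => zpair (fun j => nu j * cos_shift k s j) i)).
intro i. unfold zpair, cos_shift.
apply (derivable_pt_lim_plus (fun s => nu _ * cos_primitive _ s) (fun s => nu _ * cos_primitive _ s));
  apply derivable_pt_lim_scal with (f := cos_primitive _); apply cos_primitive_deriv.
Qed.

Lemma cos_series_primitive_period (nu : Z -> R) (k : Z) (M : nat) : (zindex k <= M)%nat ->
  cos_series_primitive nu k M (1 / 2) - cos_series_primitive nu k M (- (1 / 2)) = nu k.
Proof.
intros HM. unfold cos_series_primitive. rewrite <- minus_sum.
rewrite <- (sum_delta (zindex k) (nu k) M HM).
assert (Hj : forall j, nu j * cos_primitive (j - k) (1 / 2) - nu j * cos_primitive (j - k) (- (1 / 2))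
                      = if Z.eq_dec j k then nu k else 0).
{ intro j. rewrite <- Rmult_minus_distr_l, cos_primitive_period.
  destruct (Z.eq_dec (j - k) 0), (Z.eq_dec j k); try lia; [subst; ring | ring]. }
apply sum_eq. intros i _. rewrite <- zpair_delta. unfold zpair. rewrite <- !Hj. ring.
Qed.

(** Fourier inversion and decay of the coefficients. The argument only uses
    the following four properties of the Lebesgue integral on R. *)

Section FourierInversion.

Variable measurable : (R -> R) -> Prop.
Variable integral : R -> R -> (R -> R) -> R.

Hypothesis measurable_continuous :
  forall f, (forall x, continuity_pt f x) -> measurable f.
Hypothesis measurable_pointwise_limit :
  forall (fs : nat -> R -> R) f, (forall n, measurable (fs n)) ->
  (forall t, Un_cv (fun n => fs n t) (f t)) -> measurable f.
Hypothesis integral_primitive :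
  forall F f a b, a < b -> (forall x, derivable_pt_lim F x (f x)) ->
  (forall x, continuity_pt f x) -> integral a b f = F b - F a.
Hypothesis integral_dominated_cv :
  forall a b (fs : nat -> R -> R) f N, null_set N ->
  (forall n, measurable (fs n)) -> measurable f ->
  (forall n t, Rabs (fs n t) <= 1) ->
  (forall t, a <= t <= b -> ~ N t -> Un_cv (fun n => fs n t) (f t)) ->
  Un_cv (fun n => integral a b (fs n)) (integral a b f).

Lemma cos_series_measurable (nu : Z -> R) (k : Z) : prob_Z nu -> measurable (cos_series nu k).
Proof.
intros Hp. apply (measurable_pointwise_limit (fun M => cos_series_partial nu k M)).
- intro M. apply measurable_continuous. intro t. apply cos_series_partial_continuous.
- intro t. apply cos_series_cv, Hp.
Qed.

Lemma cos_series_integral (nu : Z -> R) (k : Z) :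
  prob_Z nu -> integral (- (1 / 2)) (1 / 2) (cos_series nu k) = nu k.
Proof.
intros Hp.
assert (Hpartial : forall M, (zindex k <= M)%nat ->
          integral (- (1 / 2)) (1 / 2) (cos_series_partial nu k M) = nu k).
{ intros M HM. rewrite (integral_primitive (cos_series_primitive nu k M)); [| lra | |].
  - apply cos_series_primitive_period, HM.
  - intro t. apply cos_series_primitive_deriv.
  - intro t. apply cos_series_partial_continuous. }
apply (UL_sequence (fun M => integral (- (1 / 2)) (1 / 2) (cos_series_partial nu k M))).
- apply (integral_dominated_cv _ _ _ _ (fun _ => False) null_set_empty).
  + intro M. apply measurable_continuous. intro t. apply cos_series_partial_continuous.
  + apply cos_series_measurable, Hp.
  + intros M t. apply cos_series_partial_bound, Hp.
  + intros t _ _. apply cos_series_cv, Hp.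
- apply (Un_cv_eventually_eq (fun _ => nu k) _ _ (zindex k)).
  + intros M HM. symmetry. apply Hpartial, HM.
  + apply Un_cv_const.
Qed.

Lemma fourier_coefficients_vanish (nu : nat -> Z -> R) (N : R -> Prop) (k : Z) :
  (forall n, prob_Z (nu n)) -> null_set N ->
  (forall t, - (1 / 2) <= t < 1 / 2 -> ~ N t -> exists re im : nat -> R,
     (forall n, fourier_re (nu n) t (re n)) /\ (forall n, fourier_im (nu n) t (im n)) /\
     Un_cv re 0 /\ Un_cv im 0) ->
  Un_cv (fun n => nu n k) 0.
Proof.
intros Hp HN Hdecay.
assert (Hzero : integral (- (1 / 2)) (1 / 2) (fun _ => 0) = 0).
{ rewrite (integral_primitive (fun _ => 0)); [ring | lra | |].
  - intro x. apply derivable_pt_lim_const.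
  - intro x. apply continuity_pt_const. intros ? ?. reflexivity. }
apply Un_cv_ext with (u := fun n => integral (- (1 / 2)) (1 / 2) (cos_series (nu n) k)).
{ intro n. apply cos_series_integral, Hp. }
rewrite <- Hzero.
(* The endpoint t = 1/2 is not covered by the hypothesis; it is added to the null set. *)
apply (integral_dominated_cv _ _ _ _ (fun t => N t \/ t = 1 / 2)).
- apply null_set_add_pt, HN.
- intro n. apply cos_series_measurable, Hp.
- apply measurable_continuous. intro x. apply continuity_pt_const. intros ? ?. reflexivity.
- intros n t. apply cos_series_bound, Hp.
- intros t Ht HNt.
  assert (Ht' : - (1 / 2) <= t < 1 / 2).
  { split; [lra|]. destruct Ht as [_ [Hlt | Heq]]; [exact Hlt | exfalso; tauto]. }
  destruct (Hdecay t Ht' (fun h => HNt (or_introl h))) as [re [im [Hre [Him [Cre Cim]]]]].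
  apply Un_cv_ext with (u := fun n => cos (2 * PI * IZR k * t) * re n + sin (2 * PI * IZR k * t) * im n).
  { intro n. symmetry. apply cos_series_fourier; [apply Hre | apply Him]. }
  replace 0 with (cos (2 * PI * IZR k * t) * 0 + sin (2 * PI * IZR k * t) * 0) by ring.
  apply CV_plus; apply Un_cv_scal; assumption.
Qed.

End FourierInversion.

Definition regular_increments (alpha C : R) (f : Z -> R) : Prop :=
  forall x y : Z, 2 * Rabs (IZR y) <= Rabs (IZR x) ->
  Rabs (f (x + y)%Z - f x) <= C * rpow (Rabs (IZR y)) alpha / rpow (Rabs (IZR x)) (1 + alpha).

Lemma Rpower_pos (x a : R) : 0 < Rpower x a.
Proof. apply exp_pos. Qed.

Lemma unit_increment_bound (alpha C : R) (f : Z -> R) (x : Z) :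
  regular_increments alpha C f -> 2 <= Rabs (IZR x) ->
  Rabs (f (x + 1)%Z - f x) <= C / Rpower (Rabs (IZR x)) (1 + alpha).
Proof.
intros Hf Hx. specialize (Hf x 1%Z). rewrite Rabs_R1 in Hf.
unfold rpow in Hf. destruct (Req_EM_T 1 0); [lra|].
destruct (Req_EM_T (Rabs (IZR x)) 0); [lra|].
replace (Rpower 1 alpha) with 1 in Hf by (unfold Rpower; rewrite ln_1, Rmult_0_r, exp_0; reflexivity).
replace (C * 1) with C in Hf by ring. apply Hf. lra.
Qed.

(* Concavity of ln: ln(x-1) <= ln x - 1/x for x > 1. *)
Lemma ln_pred_le (x : R) : 1 < x -> ln (x - 1) <= ln x - 1 / x.
Proof.
intros Hx.
assert (Hq : 0 < (x - 1) / x) by (apply Rdiv_lt_0_compat; lra).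
replace (x - 1) with (x * ((x - 1) / x)) by (field; lra).
rewrite ln_mult by lra.
pose proof (exp_ineq1_le (ln ((x - 1) / x))) as Hexp. rewrite exp_ln in Hexp by exact Hq.
replace ((x - 1) / x) with (1 - 1 / x) in * by (field; lra). lra.
Qed.

Lemma exp_le_mono (x y : R) : x <= y -> exp x <= exp y.
Proof. intros [Hlt | ->]; [left; apply exp_increasing, Hlt | right; reflexivity]. Qed.

(* Discrete form of x^(-1-a) = -(1/a) d/dx x^(-a): the summands are bounded by a telescoping sequence. *)
Lemma power_telescope (a x : R) : 0 < a -> 1 < x ->
  / Rpower x (1 + a) <= (/ Rpower (x - 1) a - / Rpower x a) / a.
Proof.
intros Ha Hx.
rewrite Rpower_plus, Rpower_1 by lra. unfold Rpower.
(* (x-1)^(-a) >= x^(-a) exp(a/x) >= x^(-a) (1 + a/x) *)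
assert (Hbound : / exp (a * ln x) * (1 + a / x) <= / exp (a * ln (x - 1))).
{ rewrite <- !exp_Ropp.
  apply Rle_trans with (exp (- (a * ln x)) * exp (a / x)).
  - apply Rmult_le_compat_l; [left; apply exp_pos | apply exp_ineq1_le].
  - rewrite <- exp_plus. apply exp_le_mono.
    pose proof (Rmult_le_compat_l a _ _ (Rlt_le _ _ Ha) (ln_pred_le x Hx)).
    replace (a * (ln x - 1 / x)) with (a * ln x - a / x) in * by (field; lra). lra. }
pose proof (exp_pos (a * ln x)).
apply Rle_trans with ((/ exp (a * ln x) * (1 + a / x) - / exp (a * ln x)) / a).
- right. field. lra.
- unfold Rdiv. apply Rmult_le_compat_r; [left; apply Rinv_0_lt_compat, Ha | lra].
Qed.

Definition increment_pair (f : Z -> R) : nat -> R := zpair (fun k => Rabs (f k - f (k - 1)%Z)).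

Lemma increment_pair_nonneg (f : Z -> R) (i : nat) : 0 <= increment_pair f i.
Proof. apply zpair_nonneg. intro. apply Rabs_pos. Qed.

Lemma increment_pair_cv0 (f : nat -> Z -> R) (i : nat) :
  (forall k, Un_cv (fun n => f n k) 0) -> Un_cv (fun n => increment_pair (f n) i) 0.
Proof.
intros Hf. unfold increment_pair, zpair.
replace 0 with (Rabs (0 - 0) + Rabs (0 - 0)) by (rewrite Rminus_0_r, Rabs_R0; ring).
apply CV_plus; apply cv_cvabs, CV_minus; apply Hf.
Qed.

(* For i >= 3, both increments of the pair sit at distance >= i - 1 from 0. *)
Lemma increment_pair_bound (a C : R) (f : Z -> R) (i : nat) :
  0 < a -> 0 < C -> regular_increments a C f -> (3 <= i)%nat ->
  increment_pair f i <= 2 * C / a * (/ Rpower (INR i - 2) a - / Rpower (INR i - 1) a).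
Proof.
intros Ha HC Hf Hi.
assert (HiR : 3 <= INR i) by (replace 3 with (INR 3) by (simpl; ring); apply le_INR, Hi).
assert (Hpos : Rabs (f (Z.of_nat i) - f (Z.of_nat i - 1)%Z) <= C / Rpower (INR i - 1) (1 + a)).
{ pose proof (unit_increment_bound a C f (Z.of_nat i - 1) Hf) as Hb.
  replace (Z.of_nat i - 1 + 1)%Z with (Z.of_nat i) in Hb by lia.
  rewrite minus_IZR, <- INR_IZR_INZ, Rabs_right in Hb by lra. apply Hb. lra. }
assert (Hneg : Rabs (f (- Z.of_nat i - 1)%Z - f (- Z.of_nat i - 1 - 1)%Z)
               <= C / Rpower (INR i - 1) (1 + a)).
{ pose proof (unit_increment_bound a C f (- Z.of_nat i - 2) Hf) as Hb.
  replace (- Z.of_nat i - 2 + 1)%Z with (- Z.of_nat i - 1)%Z in Hb by lia.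
  replace (- Z.of_nat i - 1 - 1)%Z with (- Z.of_nat i - 2)%Z by lia.
  rewrite minus_IZR, opp_IZR, <- INR_IZR_INZ, Rabs_left in Hb by lra.
  replace (- (- INR i - 2)) with (INR i + 2) in Hb by ring.
  apply Rle_trans with (C / Rpower (INR i + 2) (1 + a)).
  - apply Hb. lra.
  - unfold Rdiv. apply Rmult_le_compat_l; [lra|].
    apply Rinv_le_contravar; [apply Rpower_pos | apply Rle_Rpower_l; lra]. }
pose proof (power_telescope a (INR i - 1) Ha ltac:(lra)) as Htele.
replace (INR i - 1 - 1) with (INR i - 2) in Htele by ring.
unfold increment_pair, zpair.
apply Rle_trans with (C / Rpower (INR i - 1) (1 + a) + C / Rpower (INR i - 1) (1 + a)); [lra|].
replace (C / Rpower (INR i - 1) (1 + a) + C / Rpower (INR i - 1) (1 + a))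
  with (2 * C * / Rpower (INR i - 1) (1 + a)) by (unfold Rdiv; ring).
replace (2 * C / a * (/ Rpower (INR i - 2) a - / Rpower (INR i - 1) a))
  with (2 * C * ((/ Rpower (INR i - 2) a - / Rpower (INR i - 1) a) / a)) by (unfold Rdiv; ring).
apply Rmult_le_compat_l; lra.
Qed.

Lemma sum_telescope_le (e g : nat -> R) (M : nat) :
  (forall i, (M < i)%nat -> e i <= g (pred i) - g i) ->
  forall j, sum_f_R0 e (M + j) - sum_f_R0 e M <= g M - g (M + j)%nat.
Proof.
intros He j. induction j as [|j IH]; [rewrite Nat.add_0_r; lra|].
rewrite Nat.add_succ_r, tech5. specialize (He (S (M + j)) ltac:(lia)). simpl pred in He. lra.
Qed.

Lemma increment_tail_bound (a C : R) (f : Z -> R) (M : nat) :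
  0 < a -> 0 < C -> regular_increments a C f -> (2 <= M)%nat -> forall j,
  sum_f_R0 (increment_pair f) (M + j) - sum_f_R0 (increment_pair f) M
    <= 2 * C / a * / Rpower (INR M - 1) a.
Proof.
intros Ha HC Hf HM j.
set (g := fun i => 2 * C / a * / Rpower (INR i - 1) a).
assert (Hg : forall i, 0 <= g i).
{ intro i. unfold g, Rdiv. apply Rmult_le_pos.
  - apply Rmult_le_pos; [lra | left; apply Rinv_0_lt_compat, Ha].
  - left. apply Rinv_0_lt_compat, Rpower_pos. }
assert (Hterm : forall i, (M < i)%nat -> increment_pair f i <= g (pred i) - g i).
{ intros [|i] Hi; [lia|]. simpl pred. unfold g.
  replace (INR i - 1) with (INR (S i) - 2) by (rewrite S_INR; ring).
  rewrite <- Rmult_minus_distr_l. apply increment_pair_bound; auto; lia. }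
pose proof (sum_telescope_le (increment_pair f) g M Hterm j) as Htele.
pose proof (Hg (M + j)%nat). fold (g M). lra.
Qed.

Lemma inv_power_small (a d : R) : 0 < a -> 0 < d ->
  exists M : nat, (2 <= M)%nat /\ / Rpower (INR M - 1) a < d.
Proof.
intros Ha Hd.
set (z := Rpower (2 / d) (/ a)).
assert (Hz : 0 < z) by apply Rpower_pos.
assert (Hza : Rpower z a = 2 / d).
{ unfold z. rewrite Rpower_mult. replace (/ a * a) with 1 by (field; lra).
  apply Rpower_1. apply Rdiv_lt_0_compat; lra. }
destruct (archimed z) as [Hup _].
assert (Hup0 : (0 < up z)%Z) by (apply lt_IZR; lra).
exists (Z.to_nat (up z) + 2)%nat. split; [lia|].
rewrite plus_INR, INR_IZR_INZ, Z2Nat.id by lia. replace (INR 2) with 2 by (simpl; ring).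
assert (Hlt : Rpower z a < Rpower (IZR (up z) + 2 - 1) a) by (apply Rlt_Rpower_l; lra).
apply Rlt_le_trans with (/ (2 / d)).
- apply Rinv_lt_contravar; [|lra]. apply Rmult_lt_0_compat; [apply Rdiv_lt_0_compat; lra | apply Rpower_pos].
- replace (/ (2 / d)) with (d / 2) by (field; lra). lra.
Qed.

Lemma increment_uniform_tails (a C : R) (f : nat -> Z -> R) :
  0 < a -> 0 < C -> (forall n, regular_increments a C (f n)) ->
  forall eps, 0 < eps -> exists M, forall n j,
    sum_f_R0 (increment_pair (f n)) (M + j) - sum_f_R0 (increment_pair (f n)) M <= eps.
Proof.
intros Ha HC Hf eps Heps.
destruct (inv_power_small a (eps * a / (2 * C))) as [M [HM Hsmall]]; [exact Ha | |].
{ apply Rdiv_lt_0_compat; [apply Rmult_lt_0_compat|]; lra. }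
exists M. intros n j.
apply Rle_trans with (2 * C / a * / Rpower (INR M - 1) a).
- apply increment_tail_bound; auto.
- apply Rle_trans with (2 * C / a * (eps * a / (2 * C))).
  + apply Rmult_le_compat_l; [|lra].
    unfold Rdiv. apply Rmult_le_pos; [lra | left; apply Rinv_0_lt_compat, Ha].
  + right. field. lra.
Qed.

Module Lebesgue.
Import HB.structures all_boot all_order all_algebra all_classical all_reals all_analysis.
Import measurable_realfun Rstruct Rstruct_topology.
Import Order.TTheory GRing.Theory Num.Theory.
Import numFieldNormedType.Exports.
Local Open Scope classical_set_scope.
Local Open Scope ring_scope.
(* R as a normed module over itself, for the convergence lemmas below. *)
HB.instance Definition _ := NormedModule.copy R R^o.

Lemma Un_cv_cvg (u : nat -> R) (l : R) : Un_cv u l -> u @ \oo --> l.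
Proof.
move=> H; apply/cvgrPdist_lt => e /RltP /H [N HN].
near=> n.
have nN : (n >= N)%coq_nat by apply/ssrnat.leP; near: n; exact: nbhs_infty_ge.
by move: (HN n nN); rewrite /R_dist RabsE => /RltP; rewrite distrC.
Unshelve. all: by end_near. Qed.

Lemma cvg_Un_cv (u : nat -> R) (l : R) : u @ \oo --> l -> Un_cv u l.
Proof.
move/cvgrPdist_lt => H e /RltP /H [N _ HN].
exists N => n /ssrnat.leP nN; rewrite /R_dist RabsE; apply/RltP; rewrite distrC; exact: HN.
Qed.

Lemma derivable_pt_lim_derive (F : R -> R) (x l : R) : derivable_pt_lim F x l ->
  derivable F x 1 /\ derive1 F x = l.
Proof.
move=> H.
have Hcv : (fun h : R => h^-1 *: (F (h + x) - F x)) @ 0^' --> l.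
  apply/cvgrPdist_lt => e /RltP e0.
  have [d dP] := H e e0.
  apply/nbhs_ballP; exists (pos d); first by apply/RltP; exact: cond_pos.
  move=> h /= hb hn0.
  have hd : (Rabs h < d)%coqR.
    by apply/RltP; rewrite RabsE; move: hb; rewrite /ball /= sub0r normrN.
  move: (dP h (fun E => (negP hn0) (introT eqP E)) hd) => /RltP.
  rewrite /Rdiv /= RabsE distrC. by rewrite (addrC h x) /GRing.scale /= mulrC.
split; last exact: cvg_lim.
apply/cvg_ex; exists l; apply: cvg_trans Hcv; apply: near_eq_cvg; apply: nearW => h /=.
by rewrite /GRing.scale /= mulr1.
Qed.

Definition integral (a b : R) (f : R -> R) : R := Rintegral (@lebesgue_measure R) `[a, b] f.

(* R with its Borel sigma-algebra, and Borel measurability of real functions. *)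
Notation RM := (Real_sort__canonical__measurable_structure_SigmaRing R).
Definition measurableR (f : R -> R) : Prop := measurable_fun (T:=RM) (U:=RM) setT f.

Lemma continuity_pt_continuous (f : R -> R) : (forall x, continuity_pt f x) -> continuous f.
Proof. by move=> H x; apply/continuity_ptE. Qed.

Lemma measurable_continuous (f : R -> R) : (forall x, continuity_pt f x) -> measurableR f.
Proof. move=> H; apply: continuous_measurable_fun; exact: continuity_pt_continuous. Qed.

Lemma measurable_pointwise_limit (fs : nat -> R -> R) (f : R -> R) : (forall n, measurableR (fs n)) ->
  (forall t, Un_cv (fun n => fs n t) (f t)) -> measurableR f.
Proof.
move=> mfs cv; apply: (@measurable_fun_cvg _ RM R setT fs f mfs).
by move=> x _; apply: Un_cv_cvg; exact: cv.
Qed.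

Lemma integral_primitive (F f : R -> R) (a b : R) : (a < b)%coqR ->
  (forall x, derivable_pt_lim F x (f x)) -> (forall x, continuity_pt f x) ->
  integral a b f = (F b - F a)%coqR.
Proof.
move=> /RltP ab dF cf.
have cF : continuous F.
  apply: continuity_pt_continuous => x.
  exact: (derivable_continuous_pt F x (exist _ (f x) (dF x))).
rewrite /integral /Rintegral (@continuous_FTC2 _ f F a b ab) //.
- exact/continuous_subspaceT/continuity_pt_continuous.
- split.
  + by move=> x _; case: (derivable_pt_lim_derive _ _ _ (dF x)).
  + exact/cvg_at_right_filter/cF.
  + exact/cvg_at_left_filter/cF.
- by move=> x _; case: (derivable_pt_lim_derive _ _ _ (dF x)).
Qed.

Lemma interval_union_measure (a b : nat -> R) (eps : R) :
  (forall n, a n <= b n)%coqR -> (forall K, sum_f_R0 (fun n => b n - a n) K <= eps)%coqR ->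
  (lebesgue_measure (\bigcup_n `]a n, b n[%classic : set RM) <= eps%:E)%E.
Proof.
move=> ab sab.
have mI : forall n, measurable (`]a n, b n[%classic : set RM) by move=> n; exact: measurable_itv.
apply: (le_trans (measure_sigma_subadditive lebesgue_measure mI (bigcupT_measurable _ mI) (fun x h => h))).
apply: lime_le; first by apply: is_cvg_nneseries => n _ _; exact: measure_ge0.
apply: nearW => K.
rewrite (eq_bigr (fun n => (b n - a n)%:E)); last first.
  move=> n _; have := @lebesgue_measure_itv R `]a n, b n[; rewrite /= => ->.
  rewrite lte_fin; case: ifP => h; first by rewrite EFinB.
  by have /RleP := ab n; rewrite le_eqVlt h orbF => /eqP ->; rewrite subrr.
rewrite sumEFin lee_fin.
case: K => [|K]; first by rewrite big_geq // -R0E; apply/RleP; move: (sab 0%N) (ab 0%N) => /= ? ?; lra.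
by have /RleP := sab K; rewrite sum_f_R0E.
Qed.

Lemma null_set_negligible (N : R -> Prop) : Defs.null_set N -> negligible (@lebesgue_measure R) N.
Proof.
move=> HN.
have /choice[ab Hab] : forall m : nat, exists ab : (nat -> R) * (nat -> R),
   (forall n, ab.1 n <= ab.2 n)%coqR /\ (forall x, N x -> exists n, ab.1 n < x < ab.2 n)%coqR /\
   (forall K, sum_f_R0 (fun n => ab.2 n - ab.1 n) K <= / INR m.+1)%coqR.
  move=> m; have [|a [b H]] := HN (/ INR m.+1)%coqR; last by exists (a, b).
  by apply: Rinv_0_lt_compat; apply: lt_0_INR; apply/ssrnat.ltP.
pose B : set RM := \bigcap_m \bigcup_n `](ab m).1 n, (ab m).2 n[%classic.
exists B; split.
- apply: bigcapT_measurable => m; apply: bigcupT_measurable => n; exact: measurable_itv.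
- apply/eqP; rewrite eq_le measure_ge0 andbT; apply/lee_addgt0Pr => e e0; rewrite add0e.
  have [m me] : exists m : nat, (m.+1%:R)^-1 < e.
    exists (Num.bound e^-1).
    rewrite -(invrK e) ltf_pV2 ?posrE ?invr_gt0 //.
    apply: (lt_le_trans (archi_boundP _)); first by rewrite invr_ge0 ltW.
    by rewrite invrK ler_nat.
  have [ab0 [_ abs]] := Hab m.
  apply: (@le_trans _ _ (lebesgue_measure (\bigcup_n `](ab m).1 n, (ab m).2 n[%classic : set RM))).
    apply: le_measure; rewrite ?inE //.
    + apply: bigcapT_measurable => k; apply: bigcupT_measurable => n; exact: measurable_itv.
    + apply: bigcupT_measurable => n; exact: measurable_itv.
    + by move=> x /(_ m I).
  apply: (le_trans (interval_union_measure _ _ _ ab0 abs)).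
  by rewrite lee_fin INRE ltW.
- move=> x Nx m _; have [_ [/(_ x Nx) [n [h1 h2]] _]] := Hab m.
  by exists n => //=; rewrite in_itv /=; apply/andP; split; apply/RltP.
Qed.

Lemma integral_dominated_cv (a b : R) (fs : nat -> R -> R) (f : R -> R) (N : R -> Prop) :
  Defs.null_set N -> (forall n, measurableR (fs n)) -> measurableR f ->
  (forall n t, Rabs (fs n t) <= 1)%coqR ->
  (forall t, (a <= t <= b)%coqR -> ~ N t -> Un_cv (fun n => fs n t) (f t)) ->
  Un_cv (fun n => integral a b (fs n)) (integral a b f).
Proof.
move=> HN mfs mf bd cv.
have mD : measurable (`[a, b]%classic : set RM) by exact: measurable_itv.
have ig : lebesgue_measure.-integrable (`[a, b]%classic : set RM) (EFin \o (cst 1 : R -> R)).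
  apply: continuous_compact_integrable; first exact: segment_compact.
  apply: continuous_subspaceT => x; exact: cst_continuous.
have := @dominated_convergence _ _ _ lebesgue_measure _ mD (fun n => EFin \o fs n) (EFin \o f) (EFin \o cst 1).
case.
- by move=> n; apply/measurable_EFinP; apply: (measurable_funS _ _ (mfs n)).
- by apply/measurable_EFinP; apply: (measurable_funS _ _ mf).
- have [B [mB B0 NB]] := null_set_negligible _ HN.
  exists B; split => // x /= nP; apply: NB; apply: contrapT => Nx; apply: nP => Dx.
  apply/fine_cvgP; split; first exact: nearW.
  apply: Un_cv_cvg; apply: cv => //.
  by move: Dx; rewrite /= in_itv /= => /andP[/RleP h1 /RleP h2].
- exact: ig.
- by apply: aeW => x n _ /=; rewrite lee_fin -RabsE; apply/RleP; exact: bd.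
move=> intf _ cvf.
apply: cvg_Un_cv; rewrite /integral /Rintegral.
by apply: fine_cvg; rewrite fineK //; exact: integrable_fin_num.
Qed.

End Lebesgue.

Theorem lemma2p2p1 (mu : nat -> Z -> R)
  (Hprob : forall n, (1 <= n)%nat -> prob_Z (mu n))
  (H1 : exists alpha C, 0 < alpha /\ alpha <= 1 /\ 0 < C /\
        forall n, (1 <= n)%nat -> forall x y : Z,
          2 * Rabs (IZR y) <= Rabs (IZR x) ->
          Rabs (mu n (x + y)%Z - mu n x)
            <= C * rpow (Rabs (IZR y)) alpha / rpow (Rabs (IZR x)) (1 + alpha))
  (H2 : exists N : R -> Prop, null_set N /\
        forall t, -(1/2) <= t < 1/2 -> ~ N t ->
        exists re im : nat -> R,
          (forall n, (1 <= n)%nat -> fourier_re (mu n) t (re n)) /\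
          (forall n, (1 <= n)%nat -> fourier_im (mu n) t (im n)) /\
          Un_cv re 0 /\ Un_cv im 0) :
  exists L : nat -> R,
    (forall n, (1 <= n)%nat -> Zsum (fun k => Rabs (mu n k - mu n (k - 1)%Z)) (L n)) /\
    Un_cv L 0.
Proof.
destruct H1 as [a [C [Ha [_ [HC Hreg]]]]].
destruct H2 as [N [HN Hdecay]].
(* nu n = mu n for n >= 1, and nu satisfies the hypotheses for every n. *)
set (nu := fun n => mu (Nat.max 1 n)).
assert (Hidx : forall n, (1 <= Nat.max 1 n)%nat) by lia.
assert (Hnu_cv : forall u : nat -> R, Un_cv u 0 -> Un_cv (fun n => u (Nat.max 1 n)) 0).
{ intros u Hu. apply (Un_cv_eventually_eq u _ _ 1); [|exact Hu].
  intros n Hn. f_equal. lia. }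
assert (Hpoint : forall k, Un_cv (fun n => nu n k) 0).
{ intro k. apply (fourier_coefficients_vanish Lebesgue.measurableR Lebesgue.integral
    Lebesgue.measurable_continuous Lebesgue.measurable_pointwise_limit
    Lebesgue.integral_primitive Lebesgue.integral_dominated_cv nu N k); [| exact HN |].
  - intro n. apply Hprob, Hidx.
  - intros t Ht HNt. destruct (Hdecay t Ht HNt) as [re [im [Hre [Him [Cre Cim]]]]].
    exists (fun n => re (Nat.max 1 n)), (fun n => im (Nat.max 1 n)).
    repeat split; try (intro n; apply Hre || apply Him; apply Hidx); apply Hnu_cv; assumption. }
destruct (series_cv0_of_uniform_tails (fun n => increment_pair (nu n))) as [L [HL HL0]].
- intros n i. apply increment_pair_nonneg.
- intro i. apply increment_pair_cv0, Hpoint.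
- apply (increment_uniform_tails a C nu Ha HC). intro n. exact (Hreg _ (Hidx n)).
- exists L. split; [|exact HL0].
  intros n Hn. replace (mu n) with (nu n) by (unfold nu; f_equal; lia). apply HL.
Qed.
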